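(* Assume $V=W$, that $\mathcal{A}$ is coercive with constant $\alpha>0$ (i.e. $\alpha\|\phi\|_W^2\le\mathcal{A}(\phi,\phi)$ for all $\phi\in W$), and that $W_\theta\cup S_\theta\subseteq V_\eta$. Let $(\tilde w^n_\theta)\subset W_\theta$ be a minimizing sequence, i.e. $\lim_n\|u-\tilde w^n_\theta\|_{op,\eta}=\inf_{w_\theta\in W_\theta}\|u-w_\theta\|_{op,\eta}$, which converges weakly in $W$ to $u^*_\theta\in\mathrm{cl}^{seq}_w(W_\theta)$. Then $$\|u-u^*_\theta\|_W\le\Big(1+\frac{2M}{\alpha}\Big)\inf_{w_\theta\in W_\theta}\|u-w_\theta\|_W.$$
   Context: $W$ and $V$ are reflexive separable real Banach spaces (here $V=W$, a Hilbert space with scalar product $(\cdot,\cdot)_W$). $\mathcal{A}:W\times V\to\mathbb{R}$ is a bilinear form with $\mathcal{A}(w,v)\le M\|w\|_W\|v\|_V$ for all $w,v$, $\mathcal{F}:V\to\mathbb{R}$ is bounded linear, and $u\in W$ is the unique solution of $\mathcal{A}(u,v)=\mathcal{F}(v)$ for all $v\in V$. $W_\theta\subseteq W$ and $V_\eta\subseteq V$ are arbitrary subsets, $V_\eta$ containing an element of nonzero norm. For $w\in W$, $\|w\|_{op,\eta}:=\sup_{v_\eta\in V_\eta,\ \|v_\eta\|_V\neq0}\mathcal{A}(w,v_\eta)/\|v_\eta\|_V$. $S_\theta:=\{w_1-w_2:\ w_1,w_2\in W_\theta\}$. $\mathrm{cl}^{seq}_w(W_\theta)$ is the set of all weak limits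 in $W$ of sequences in $W_\theta$. *)

From HB Require Import structures.
From mathcomp Require Import all_boot all_order all_algebra.
From mathcomp Require Import all_classical all_reals all_analysis.
Set Implicit Arguments. Unset Strict Implicit. Unset Printing Implicit Defensive.
Import Order.TTheory GRing.Theory Num.Theory.
Import numFieldNormedType.Exports.
Local Open Scope classical_set_scope.
Local Open Scope ring_scope.

Definition is_inner_product (R : realType) (W : normedModType R)
  (ip : W -> W -> R) : Prop :=
  (forall x y, ip x y = ip y x) /\
  (forall (a : R) x y z, ip (a *: x + y) z = a * ip x z + ip y z) /\
  (forall x, ip x x = `|x| ^+ 2).

Definition separable (R : realType) (W : normedModType R) : Prop :=
  exists D : set W, countable D /\ closure D = setT.

Definition bounded_linear_functional (R : realType) (W : normedModType R)
  (f : W -> R) : Prop :=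
  (forall (a : R) x y, f (a *: x + y) = a * f x + f y) /\ continuous f.

Definition bilinear_form (R : realType) (W : normedModType R)
  (A : W -> W -> R) : Prop :=
  (forall (a : R) x y z, A (a *: x + y) z = a * A x z + A y z) /\
  (forall (a : R) x y z, A z (a *: x + y) = a * A z x + A z y).

Definition weak_cvg (R : realType) (W : normedModType R)
  (w : nat -> W) (x : W) : Prop :=
  forall f : W -> R, bounded_linear_functional f ->
    f (w n) @[n --> \oo] --> f x.

Definition weak_seq_closure (R : realType) (W : normedModType R)
  (S : set W) : set W :=
  [set x | exists w : nat -> W, (forall n, S (w n)) /\ weak_cvg w x].

Definition opnorm (R : realType) (W : normedModType R)
  (A : W -> W -> R) (Veta : set W) (w : W) : R :=
  sup [set A w v / `|v| | v in [set v | Veta v /\ `|v| != 0]].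

Definition diffset (R : realType) (W : normedModType R) (S : set W) : set W :=
  [set x | exists w1 w2, S w1 /\ S w2 /\ x = w1 - w2].

From HB Require Import structures.
From mathcomp Require Import all_boot all_order all_algebra.
From mathcomp Require Import all_classical all_reals all_analysis.
From mathcomp Require Import ring lra.
Import Order.TTheory GRing.Theory Num.Theory.
Import numFieldNormedType.Exports.
Set Implicit Arguments. Unset Strict Implicit.
Local Open Scope classical_set_scope.
Local Open Scope ring_scope.

(* A Cea-type argument.  For w in W_theta the difference v := w - w~n lies in V_eta,
   so coercivity gives alpha |v| <= M |u - w| + |u - w~n|_{op,eta}.  Along the
   minimizing sequence the last term tends to an infimum that is at most M |u - w|, hence
   eventually |w - w~n| <= 2M |u - w| / alpha + e.  Closed balls of a Hilbert space are
   weakly sequentially closed, so the same bound holds for |w - u*|, and the triangle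
   inequality through w concludes. *)

Section LinearInFirstArgument.
Variables (R : pzRingType) (V : lmodType R) (T : Type) (f : V -> T -> R).
Hypothesis f_linear : forall (a : R) x y z, f (a *: x + y) z = a * f x z + f y z.

Lemma linl0 z : f 0 z = 0.
Proof.
have := f_linear 1 0 0 z; rewrite scaler0 addr0 mul1r -[in LHS](addr0 (f 0 z)).
by move/addrI/esym.
Qed.

Lemma linlD x y z : f (x + y) z = f x z + f y z.
Proof. by have := f_linear 1 x y z; rewrite scale1r mul1r. Qed.

Lemma linlN x z : f (- x) z = - f x z.
Proof. by rewrite -[- x]addr0 -scaleN1r f_linear linl0 addr0 mulN1r. Qed.

Lemma linlB x y z : f (x - y) z = f x z - f y z.
Proof. by rewrite linlD linlN. Qed.

End LinearInFirstArgument.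

Section InnerProduct.
Variables (R : realType) (W : normedModType R) (ip : W -> W -> R).
Hypothesis ip_inner : is_inner_product ip.

Let ipC : forall x y, ip x y = ip y x. Proof. by case: ip_inner. Qed.
Let ip_linear : forall (a : R) x y z, ip (a *: x + y) z = a * ip x z + ip y z.
Proof. by case: ip_inner => _ []. Qed.
Let ip_norm : forall x, ip x x = `|x| ^+ 2. Proof. by case: ip_inner => _ []. Qed.

Lemma normB_sqr a b : `|a - b| ^+ 2 = `|a| ^+ 2 - 2 * ip a b + `|b| ^+ 2.
Proof.
rewrite -!ip_norm !(linlB ip_linear) (ipC a (a - b)) (ipC b (a - b)).
by rewrite !(linlB ip_linear) (ipC b a); ring.
Qed.

Lemma normD_sqr a b : `|a + b| ^+ 2 = `|a| ^+ 2 + 2 * ip a b + `|b| ^+ 2.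
Proof.
rewrite -!ip_norm !(linlD ip_linear) (ipC a (a + b)) (ipC b (a + b)).
by rewrite !(linlD ip_linear) (ipC b a); ring.
Qed.

Lemma ip_continuous z : continuous (ip^~ z).
Proof.
have -> : ip^~ z = (fun x => (`|x + z| * `|x + z| - `|x - z| * `|x - z|) / 4).
  by apply/funext => x; rewrite -!expr2 normD_sqr normB_sqr; field.
move=> x; apply: cvgM; last exact: cvg_cst.
by apply: cvgB; apply: cvgM; apply: cvg_norm;
  [apply: cvgD|apply: cvgD|apply: cvgB|apply: cvgB]; exact: cvg_id || exact: cvg_cst.
Qed.

Lemma ip_bounded_linear z : bounded_linear_functional (ip^~ z).
Proof. by split; [move=> a x y; exact: ip_linear | exact: ip_continuous]. Qed.

Lemma ip_le_sqr a b : 2 * ip a b <= `|a| ^+ 2 + `|b| ^+ 2.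
Proof. by have := sqr_ge0 `|a - b|; rewrite normB_sqr; lra. Qed.

Lemma weak_cvg_norm_le (w : nat -> W) (x y : W) (B : R) :
  weak_cvg w x -> (\forall n \near \oo, `|y - w n| <= B) -> `|y - x| <= B.
Proof.
move=> wx near_B; set z := y - x.
have [n0 /(le_trans (normr_ge0 _)) B_ge0] := filter_ex near_B.
have : 2 * (ip y z - ip x z) <= B ^+ 2 + `|z| ^+ 2.
  apply: (@ler_cvg_to _ \oo _ _ (fun n => 2 * ip (y - w n) z) (fun=> B ^+ 2 + `|z| ^+ 2)).
  - under eq_fun do rewrite (linlB ip_linear).
    exact: cvgM (cvg_cst _) (cvgB (cvg_cst _) (wx _ (ip_bounded_linear z))).
  - exact: cvg_cst.
  apply: filterS near_B => n le_B; apply: le_trans (ip_le_sqr _ _) _.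
  by rewrite lerD2r ler_sqr ?nnegrE.
rewrite -(linlB ip_linear) ip_norm => sqr_le.
by rewrite -ler_sqr ?nnegrE //; lra.
Qed.

End InnerProduct.

Section OperatorNorm.
Variables (R : realType) (W : normedModType R) (A : W -> W -> R) (M : R) (Veta : set W).
Hypothesis A_bounded : forall w v, A w v <= M * `|w| * `|v|.

Lemma opnorm_ge x v : Veta v -> `|v| != 0 -> A x v / `|v| <= opnorm A Veta x.
Proof.
move=> Vv v_neq0; apply: ub_le_sup; last by exists v.
exists (M * `|x|) => _ [y [_ y_neq0] <-].
by rewrite ler_pdivrMr // lt_def y_neq0 normr_ge0.
Qed.

Lemma opnorm_le x : (exists v, Veta v /\ `|v| != 0) -> opnorm A Veta x <= M * `|x|.
Proof.
move=> [v0 [Vv0 v0_neq0]]; apply: ge_sup; first by exists (A x v0 / `|v0|), v0.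
move=> _ [y [_ y_neq0] <-].
by rewrite ler_pdivrMr // lt_def y_neq0 normr_ge0.
Qed.

Variable alpha : R.
Hypothesis A_coercive : forall phi, alpha * `|phi| ^+ 2 <= A phi phi.

Lemma coercive_bound_gt0 (v : W) : `|v| != 0 -> 0 < alpha -> 0 < M.
Proof.
move=> v_neq0 alpha_gt0; have v_gt0 : 0 < `|v| by rewrite normr_gt0 -normr_eq0.
have := le_trans (A_coercive v) (A_bounded v v).
rewrite -mulrA -expr2 ler_pM2r ?exprn_gt0 //; exact: lt_le_trans.
Qed.

Hypothesis A_linear : forall (a : R) x y z, A (a *: x + y) z = a * A x z + A y z.

Lemma coercive_norm_le x v :
  Veta v -> `|v| != 0 -> alpha * `|v| <= M * `|v - x| + opnorm A Veta x.
Proof.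
move=> Vv v_neq0; have v_gt0 : 0 < `|v| by rewrite normr_gt0 -normr_eq0.
have := opnorm_ge x Vv v_neq0; rewrite ler_pdivrMr // => Ax_le.
have Av : A v v = A (v - x) v + A x v by rewrite -(linlD A_linear) subrK.
rewrite -(ler_pM2r v_gt0) -mulrA -expr2 mulrDl (le_trans (A_coercive v)) // Av.
exact: lerD (A_bounded _ _) Ax_le.
Qed.

End OperatorNorm.

Section MinimizingSequence.
Variables (R : realType) (W : normedModType R) (A : W -> W -> R) (M alpha : R).
Variables (u : W) (Wth Veta : set W) (wt : nat -> W).
Hypotheses (A_linear : forall (a : R) x y z, A (a *: x + y) z = a * A x z + A y z)
  (A_bounded : forall w v, A w v <= M * `|w| * `|v|)
  (Veta_nontrivial : exists v, Veta v /\ `|v| != 0)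
  (alpha_gt0 : 0 < alpha)
  (A_coercive : forall phi, alpha * `|phi| ^+ 2 <= A phi phi)
  (diffset_sub : diffset Wth `<=` Veta)
  (wt_in : forall n, Wth (wt n))
  (wt_minimizing : opnorm A Veta (u - wt n) @[n --> \oo] -->
     inf [set opnorm A Veta (u - w) | w in Wth]).

Let M_ge0 : 0 <= M.
Proof.
have [v [_ v_neq0]] := Veta_nontrivial.
exact/ltW/(coercive_bound_gt0 A_bounded A_coercive v_neq0 alpha_gt0).
Qed.

Lemma inf_opnorm_le w : Wth w -> inf [set opnorm A Veta (u - w') | w' in Wth] <= M * `|u - w|.
Proof.
(* Without a lower bound, [inf] defaults to [0]. *)
move=> Ww; have [lb|no_lb] := pselect (has_lbound [set opnorm A Veta (u - w') | w' in Wth]).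
  by apply: le_trans (opnorm_le A_bounded (u - w) Veta_nontrivial); apply: (ge_inf lb); exists w.
by rewrite inf_out ?mulr_ge0 // => -[_ /no_lb].
Qed.

Lemma minimizing_seq_near w e : Wth w -> 0 < e ->
  \forall n \near \oo, `|w - wt n| <= 2 * M * `|u - w| / alpha + e.
Proof.
move=> Ww e_gt0; have := inf_opnorm_le Ww; move: wt_minimizing.
set l := inf _ => l_lim l_le.
have l_lt : l < l + alpha * e by rewrite ltrDl mulr_gt0.
apply: filterS (cvgr_lt l l_lim _ l_lt) => n op_lt.
have [->|v_neq0] := eqVneq (w - wt n) 0.
  by rewrite normr0 addr_ge0 ?(ltW e_gt0) // divr_ge0 ?(ltW alpha_gt0) // !mulr_ge0.
have Vv : Veta (w - wt n) by apply: diffset_sub; exists w, (wt n).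
have := coercive_norm_le A_bounded A_coercive A_linear (u - wt n) Vv.
rewrite normr_eq0 v_neq0 opprB addrA (subrK (wt n)) (distrC w u) => /(_ isT) coercive_le.
rewrite -(ler_pM2l alpha_gt0) mulrDr [alpha * (_ / _)]mulrC divfK ?gt_eqF //; lra.
Qed.

End MinimizingSequence.

Theorem lemma2 (R : realType) (W : completeNormedModType R)
  (ip : W -> W -> R) (A : W -> W -> R) (F : W -> R) (M alpha : R)
  (u : W) (Wth Veta : set W) (wt : nat -> W) (ustar : W) :
  is_inner_product ip ->
  separable W ->
  bilinear_form A ->
  (forall w v, A w v <= M * `|w| * `|v|) ->
  bounded_linear_functional F ->
  (forall v, A u v = F v) ->
  (forall u', (forall v, A u' v = F v) -> u' = u) ->
  (exists v, Veta v /\ `|v| != 0) ->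
  0 < alpha ->
  (forall phi, alpha * `|phi| ^+ 2 <= A phi phi) ->
  Wth `|` diffset Wth `<=` Veta ->
  (forall n, Wth (wt n)) ->
  opnorm A Veta (u - wt n) @[n --> \oo] -->
    inf [set opnorm A Veta (u - w) | w in Wth] ->
  weak_cvg wt ustar ->
  weak_seq_closure Wth ustar ->
  `|u - ustar| <= (1 + 2 * M / alpha) * inf [set `|u - w| | w in Wth].
Proof.
move=> ip_inner _ [A_linear _] A_bounded _ _ _ Veta_nontrivial alpha_gt0 A_coercive
  sub_Veta wt_in wt_minimizing wt_ustar _.
have diffset_sub : diffset Wth `<=` Veta by move=> x ?; apply: sub_Veta; right.
have dist_ustar w : Wth w -> `|w - ustar| <= 2 * M * `|u - w| / alpha.
  move=> Ww; apply/ler_addgt0Pr => e e_gt0.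
  apply: (weak_cvg_norm_le ip_inner wt_ustar).
  exact: (minimizing_seq_near A_linear A_bounded Veta_nontrivial alpha_gt0 A_coercive
    diffset_sub wt_in wt_minimizing Ww e_gt0).
have c_gt0 : 0 < 1 + 2 * M / alpha.
  have [v [_ v_neq0]] := Veta_nontrivial.
  have := coercive_bound_gt0 A_bounded A_coercive v_neq0 alpha_gt0.
  by move=> M_gt0; rewrite addr_gt0 ?divr_gt0 ?mulr_gt0.
rewrite mulrC -ler_pdivrMr //; apply: lb_le_inf; first by exists `|u - wt 0|, (wt 0).
move=> _ [w Ww <-]; rewrite ler_pdivrMr // mulrC mulrDl mul1r.
have -> : u - ustar = (u - w) + (w - ustar) by rewrite addrA subrK.
apply: le_trans (ler_normD _ _) _; rewrite lerD2l mulrAC; exact: dist_ustar.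
Qed.
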